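(* Let $S\subseteq[r]$. For $i\in\{1,\dots,r\}$, let $N(i)$ be the number of permutations $a_1a_2\cdots a_{r+1}$ of $1,\dots,r+1$ with descent set $S$ in which $r+1$ appears before $i$. Then $N(i)$ does not depend on $i$.
   Context: The descent set of a permutation $a_1a_2\cdots a_{r+1}$ is $\{j\in[r]: a_j>a_{j+1}\}$. *)

From mathcomp Require Import all_boot all_fingroup.
Set Implicit Arguments. Unset Strict Implicit. Unset Printing Implicit Defensive.

(* A permutation a_1 ... a_{r+1} of 1..r+1 is encoded as s : {perm 'I_r.+1},
   with a_{p+1} = (s p) + 1 (positions and values shifted down by one).
   A subset S of [r] = {1..r} is encoded as a set of 'I_r, where k : 'I_r
   stands for the element k+1 of [r]. *)

(* a_j > a_{j+1}, for j = k+1, i.e. s k > s (k+1) in 0-indexed positions. *)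
Definition descent_at (r : nat) (s : {perm 'I_r.+1}) (k : 'I_r) : bool :=
  s (widen_ord (leqnSn r) k) > s (lift ord0 k).

Definition descent_set (r : nat) (s : {perm 'I_r.+1}) : {set 'I_r} :=
  [set k | descent_at s k].

Definition pos_of (r : nat) (s : {perm 'I_r.+1}) (v : 'I_r.+1) : 'I_r.+1 :=
  (s^-1)%g v.

(* N(i) for i in {1..r}: encoded i = val i0 + 1 with i0 : 'I_r (so the value
   i corresponds to 0-indexed value i0 = widen i0), and r+1 is ord_max. *)
Definition Ncount (r : nat) (S : {set 'I_r}) (i0 : 'I_r) : nat :=
  #|[set s : {perm 'I_r.+1} | (descent_set s == S) &&
      (pos_of s ord_max < pos_of s (widen_ord (leqnSn r) i0))]|.

From mathcomp Require Import all_boot all_fingroup.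
From mathcomp Require Import zify.

(* Exchanging the values i and i+1 in a word changes no comparison between
   neighbouring letters unless i and i+1 are themselves neighbours.  Hence the
   map exchanging them when they are not adjacent, and fixing the word when
   they are, is a descent-set preserving involution.  It carries "r+1 before i"
   to "r+1 before i+1": in the first case because it moves the letter i to the
   place of i+1, in the second because r+1 cannot sit between two adjacent
   letters.  So N(i) = N(i+1). *)

Definition adjacent (p q : nat) : bool := (p.+1 == q) || (q.+1 == p).

Lemma adjacentC p q : adjacent p q = adjacent q p.
Proof. by rewrite /adjacent orbC. Qed.

Lemma ltn_adjacent x y z : x != y -> x != z -> adjacent y z -> (x < y) = (x < z).
Proof. by move=> /eqP xy /eqP xz /orP[] /eqP yz; apply/idP/idP; lia. Qed.

Lemma tperm_consecutive_lt n (a b x y : 'I_n) : val b = (val a).+1 ->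
  ~~ [&& x == a & y == b] -> ~~ [&& x == b & y == a] ->
  (tperm a b x < tperm a b y) = (x < y).
Proof.
rewrite !permE /= !(fun_if val) -!val_eqE /= => hab.
by repeat case: ifP => ?; move=> *; apply/idP/idP; lia.
Qed.

Section ConsecutiveValueSwap.

Variable r : nat.
Variables a b : 'I_r.+1.
Hypothesis ab_consecutive : val b = (val a).+1.

Definition positions_adjacent (s : {perm 'I_r.+1}) : bool :=
  adjacent (pos_of s a) (pos_of s b).

Definition swap_values (s : {perm 'I_r.+1}) : {perm 'I_r.+1} :=
  if positions_adjacent s then s else (s * tperm a b)%g.

Lemma pos_of_mul_tperm s v : pos_of (s * tperm a b) v = pos_of s (tperm a b v).
Proof. by rewrite /pos_of invMg tpermV permM. Qed.

Lemma positions_adjacent_mul_tperm s :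
  positions_adjacent (s * tperm a b) = positions_adjacent s.
Proof. by rewrite /positions_adjacent !pos_of_mul_tperm tpermL tpermR adjacentC. Qed.

Lemma swap_valuesK : involutive swap_values.
Proof.
move=> s; rewrite {2}/swap_values; case: ifP => adj_s; first by rewrite /swap_values adj_s.
by rewrite /swap_values positions_adjacent_mul_tperm adj_s -mulgA tperm2 mulg1.
Qed.

Lemma descent_set_swap_values s : descent_set (swap_values s) = descent_set s.
Proof.
rewrite /swap_values; case: ifP => // /negbT nadj_s.
have not_ab (x y : 'I_r.+1) : adjacent x y -> ~~ [&& s x == a & s y == b].
  move=> adj_xy; apply/andP => -[/eqP sx /eqP sy]; move/negP: nadj_s; apply.
  by rewrite /positions_adjacent /pos_of -sx -sy !permK.
apply/setP => k; rewrite !inE /descent_at !permM tperm_consecutive_lt //.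
  by apply: not_ab; rewrite /adjacent /bump /= eqxx orbT.
by rewrite andbC; apply: not_ab; rewrite /adjacent /bump /= eqxx.
Qed.

Lemma pos_of_swap_values_lt s c : c != a -> c != b ->
  (pos_of (swap_values s) c < pos_of (swap_values s) a) = (pos_of s c < pos_of s b).
Proof.
move=> ca cb; rewrite /swap_values; case: ifP => [adj_s|_].
  by apply: ltn_adjacent; rewrite // (inj_eq val_inj) (inj_eq perm_inj).
by rewrite !pos_of_mul_tperm tpermL tpermD 1?eq_sym.
Qed.

End ConsecutiveValueSwap.

Lemma Ncount_succ r (S : {set 'I_r}) (i j : 'I_r) :
  val j = (val i).+1 -> Ncount S i = Ncount S j.
Proof.
set a := widen_ord (leqnSn r) i; set b := widen_ord (leqnSn r) j => ab.
have max_neq (k : 'I_r) : ord_max != widen_ord (leqnSn r) k.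
  by rewrite -val_eqE /= neq_ltn ltn_ord orbT.
rewrite /Ncount -(card_preimset _ (can_inj (@swap_valuesK _ a b))).
apply: eq_card => s; rewrite !inE descent_set_swap_values //.
by rewrite pos_of_swap_values_lt ?max_neq.
Qed.

Lemma Ncount_eq_ord0 r (S : {set 'I_r.+1}) (k : 'I_r.+1) : Ncount S k = Ncount S ord0.
Proof.
case: k => k; elim: k => [|k IHk] k_lt; first by congr Ncount; apply: val_inj.
by rewrite -(IHk (ltnW k_lt)); apply/esym/Ncount_succ.
Qed.

Theorem lemma3p4 (r : nat) (S : {set 'I_r}) (i j : 'I_r) :
  Ncount S i = Ncount S j.
Proof.
case: r S i j => [|r] S i j; first by case: i.
by rewrite !Ncount_eq_ord0.
Qed.
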